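(* Let $G$ be a planar PCC graph and let $\sigma$ be a face of $G$ such that some vertex occurs more than once in the boundary walk of $\sigma$ (i.e. the multiset $V(\sigma)$ of boundary vertices is not a set). Then $7\le|\sigma|\le 11$. The same conclusion holds if some edge occurs more than once in the boundary walk of $\sigma$ (i.e. the multiset $E(\sigma)$ of boundary edges is not a set).
   Context: $G$ is a finite simple connected graph 2-cell embedded in the sphere. For a face $\sigma$, $V(\sigma)$ and $E(\sigma)$ are the multisets of vertices and edges traversed by the boundary walk of $\sigma$, and $|\sigma|$ is its length. For a vertex $v$, $F(v)$ is the multiset of faces incident to $v$ (one per corner) and $K(v)=1-\frac{\deg(v)}{2}+\sum_{\sigma\in F(v)}\frac1{|\sigma|}$. A prism (resp. antiprism) of order $N$ is the planar graph with $2N$ vertices, two $N$-faces and $N$ quadrilaterals (resp. $2N$ triangles), each vertex incident to two quadrilaterals and one $N$-face (resp. three triangles and one $N$-face). A planar PCC graph is such a $G$ with $K(v)>0$, $\deg(v)\ge 3$ for all $v$, not a prism or antiprism. *)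

(* Planar maps encoded as rotation systems on darts. *)
From mathcomp Require Import all_boot all_order all_algebra.
Set Implicit Arguments. Unset Strict Implicit. Unset Printing Implicit Defensive.
Import GRing.Theory Num.Theory.

Section Maps.
Variables (D : finType) (alpha sigma : D -> D).

(* alpha : edge reversal (dart d ~ oriented edge, alpha d its reverse);
   sigma : rotation of darts around their tail vertex;
   vertices = sigma-orbits, edges = alpha-orbits, faces = phi-orbits. *)
Definition face_perm (d : D) : D := sigma (alpha d).

Definition num_vertices : nat := #|[pred d | froots sigma d]|.
Definition num_faces : nat := #|[pred d | froots face_perm d]|.
Definition num_edges : nat := #|D| %/ 2.

(* 2-cell embedding of a connected graph in the sphere *)
Definition sphere_map : Prop :=
  [/\ injective sigma,
      (forall d, alpha (alpha d) = d),
      (forall d, alpha d != d),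
      (forall x y, connect (fun a b => (b == sigma a) || (b == alpha a)) x y)
    & num_vertices + num_faces = num_edges + 2].

Definition simple_map : Prop :=
  (forall d, ~~ fconnect sigma d (alpha d)) /\
  (forall d1 d2, fconnect sigma d1 d2 -> fconnect sigma (alpha d1) (alpha d2) ->
                 d1 = d2).

Definition deg (d : D) : nat := order sigma d.
Definition face_len (d : D) : nat := order face_perm d.

(* combinatorial curvature of the tail vertex of d; corners at that vertex
   correspond to darts e in its sigma-orbit, the corner face being that of e *)
Definition curvature (d : D) : rat :=
  (1 - (deg d)%:R / 2 + \sum_(e : D | fconnect sigma d e) ((face_len e)%:R)^-1)%R.

Definition face_lengths : seq nat :=
  [seq face_len d | d <- enum D & froots face_perm d].
Definition corner_lengths (d : D) : seq nat :=
  [seq face_len e | e <- enum D & fconnect sigma d e].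

Definition is_prism : Prop :=
  exists N, [/\ 3 <= N, num_vertices = 2 * N,
     perm_eq face_lengths (nseq 2 N ++ nseq N 4)
   & forall d, perm_eq (corner_lengths d) [:: 4; 4; N]].

Definition is_antiprism : Prop :=
  exists N, [/\ 3 <= N, num_vertices = 2 * N,
     perm_eq face_lengths (nseq 2 N ++ nseq (2 * N) 3)
   & forall d, perm_eq (corner_lengths d) [:: 3; 3; 3; N]].

Definition planar_PCC : Prop :=
  [/\ sphere_map, simple_map,
      (forall d, 0 < curvature d)%R,
      (forall d, 3 <= deg d)
    & ~ is_prism /\ ~ is_antiprism].

Definition face_vertex_repeat (d : D) : Prop :=
  exists d1 d2, [/\ fconnect face_perm d d1, fconnect face_perm d d2,
                    d1 != d2 & fconnect sigma d1 d2].

Definition face_edge_repeat (d : D) : Prop :=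
  exists d1, fconnect face_perm d d1 /\ fconnect face_perm d (alpha d1).

End Maps.

From mathcomp Require Import all_boot all_order all_algebra.
From mathcomp Require Import ring lra zify.
Import Order.TTheory GRing.Theory Num.Theory.
Set Implicit Arguments. Unset Strict Implicit.

(* When the boundary walk of a face F of length n passes twice through a vertex
   v, it splits into two closed walks from v to v; each has length at least 3,
   since a return after one or two steps would give a loop or a double edge, so
   n >= 6.  The face F fills two corners at v and every other corner contributes
   at most 1/3, hence 0 < K(v) <= 1/3 - deg(v)/6 + 2/n: this forces deg(v) = 3
   and n <= 11.  At a vertex of degree 3 the two visits occur at darts b and
   sigma b, and the walk from b to sigma b cannot have length 3 (its middle edge
   would be a loop), so n >= 4 + 3.  A repeated edge {d, alpha d} makes the walk
   visit the tail of d at d and at phi (alpha d) = sigma d. *)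

Section Orbits.
Variables (T : finType) (f : T -> T).

Lemma order_gt1_neq x : 1 < order f x -> f x != x.
Proof. by move=> o_gt1; apply/eqP => fx; have := findex_iter o_gt1; rewrite /= fx findex0. Qed.

Hypothesis f_inj : injective f.

Lemma order_fconnect x y : fconnect f x y -> order f y = order f x.
Proof.
move=> xy; apply: eq_card => z; rewrite !inE.
by rewrite (same_connect (fconnect_sym f_inj) xy).
Qed.

Lemma findex_add_rev x y :
  fconnect f x y -> x != y -> findex f x y + findex f y x = order f x.
Proof.
move=> xy neq_xy; have lt_o := findex_max xy.
have pos : 0 < findex f x y by rewrite lt0n findex_eq0.
have back : iter (order f x - findex f x y) f y = x.
  by rewrite -{2}(iter_findex xy) -iterD subnK ?iter_order // ltnW.
suff -> : findex f y x = order f x - findex f x y by rewrite subnKC // ltnW.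
rewrite -{1}back findex_iter // (order_fconnect xy).
by rewrite ltn_subrL pos order_gt0.
Qed.

Lemma order3_adjacent x y :
  order f x = 3 -> fconnect f x y -> x != y -> y = f x \/ x = f y.
Proof.
move=> o3 xy; move: (findex f x y) (iter_findex xy) (findex_max xy) => k <-.
rewrite o3; case: k => [|[|[|//]]] _ /=; rewrite ?eqxx // => _; [by left | right].
by rewrite -[in LHS](iter_order f_inj x) o3.
Qed.

End Orbits.

Lemma positive_curvature_bound (m n : nat) : 3 <= m -> 6 <= n ->
  (0 < 1 - m%:R / 2 + (2 / n%:R + (m%:R - 2) / 3) :> rat)%R -> m = 3 /\ n <= 11.
Proof.
move=> m_ge3 n_ge6 pos; suff : m * n < 12 + 2 * n by nia.
have n_pos : (0 < n%:R :> rat)%R by rewrite ltr0n; lia.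
have expand : (6 * n%:R * (1 - m%:R / 2 + (2 / n%:R + (m%:R - 2) / 3))
                = 12 + 2 * n%:R - m%:R * n%:R :> rat)%R.
  by field; rewrite pnatr_eq0; lia.
have := mulr_gt0 (mulr_gt0 (ltr0n rat 6) n_pos) pos.
by rewrite expand -(ltr_nat rat) natrD !natrM; lra.
Qed.

Section PlanarMaps.
Variables (D : finType) (alpha sigma : D -> D).
Hypothesis sigma_inj : injective sigma.
Hypothesis alpha_inv : involutive alpha.
Hypothesis no_loop : forall d, ~~ fconnect sigma d (alpha d).
Hypothesis no_multi_edge : forall d1 d2,
  fconnect sigma d1 d2 -> fconnect sigma (alpha d1) (alpha d2) -> d1 = d2.
Hypothesis deg_ge3 : forall d, 3 <= deg sigma d.

Local Notation phi := (face_perm alpha sigma).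
Local Notation face_len := (face_len alpha sigma).

Lemma face_perm_inj : injective phi.
Proof. exact: inj_comp sigma_inj (inv_inj alpha_inv). Qed.

Lemma face_perm_sym x y : fconnect phi x y = fconnect phi y x.
Proof. exact: (fconnect_sym face_perm_inj). Qed.

Lemma sigma_neq d : sigma d != d.
Proof. exact: order_gt1_neq (leq_trans _ (deg_ge3 d)). Qed.

Lemma alpha_face_perm_vertex x : fconnect sigma (alpha x) (phi x).
Proof. exact: fconnect1. Qed.

(* A return after one step would be a loop, after two steps a pair of parallel edges. *)
Lemma face_perm_vertex_return x j : 0 < j < 3 -> ~~ fconnect sigma x (iter j phi x).
Proof.
case: j => [|[|[|//]]] //= _; apply/negP => x_phi.
  apply: (negP (no_loop x)).
  by rewrite (connect_trans x_phi) // (fconnect_sym sigma_inj) alpha_face_perm_vertex.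
set z := phi x in x_phi.
have ax_z : alpha x = z.
  apply: no_multi_edge (alpha_face_perm_vertex x) _; rewrite alpha_inv.
  by rewrite (connect_trans x_phi) // (fconnect_sym sigma_inj) alpha_face_perm_vertex.
by move/eqP: (sigma_neq (alpha x)); rewrite {2}ax_z.
Qed.

Lemma face_len_ge3 e : 3 <= face_len e.
Proof.
rewrite /face_len leqNgt; apply/negP => lt3.
have := face_perm_vertex_return e (j := order phi e).
by rewrite order_gt0 lt3 (iter_order face_perm_inj) connect0 => /(_ isT).
Qed.

Lemma face_return_ge3 x y :
  fconnect phi x y -> x != y -> fconnect sigma x y -> 3 <= findex phi x y.
Proof.
move=> xy neq_xy; rewrite -{1}(iter_findex xy) leqNgt => x_y; apply/negP => lt3.
have := face_perm_vertex_return x (j := findex phi x y).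
by rewrite lt3 lt0n findex_eq0 neq_xy x_y => /(_ isT).
Qed.

Lemma face_len_ge6 x y :
  fconnect phi x y -> x != y -> fconnect sigma x y -> 6 <= face_len x.
Proof.
move=> xy neq_xy s_xy; rewrite /face_len -(findex_add_rev face_perm_inj xy neq_xy).
have yx : fconnect phi y x by rewrite face_perm_sym.
have := face_return_ge3 yx; rewrite eq_sym (fconnect_sym sigma_inj).
by move=> /(_ neq_xy s_xy); have := face_return_ge3 xy neq_xy s_xy; lia.
Qed.

Lemma face_perm3_neq_sigma b : iter 3 phi b != sigma b.
Proof.
apply/eqP => /= phi3; rewrite -[in RHS](alpha_inv b) in phi3.
have {}phi2 : phi (phi b) = alpha b := face_perm_inj phi3.
have pb_ab : fconnect sigma (phi b) (alpha b).
  by rewrite (fconnect_sym sigma_inj) alpha_face_perm_vertex.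
have ab_apb : fconnect sigma (alpha b) (alpha (phi b)).
  by rewrite -phi2 (fconnect_sym sigma_inj) alpha_face_perm_vertex.
by apply: (negP (no_loop (phi b))); apply: connect_trans pb_ab ab_apb.
Qed.

Lemma face_len_ge7 b : fconnect phi b (sigma b) -> 7 <= face_len b.
Proof.
move=> b_sb; have neq_b : b != sigma b by rewrite eq_sym sigma_neq.
have s_b : fconnect sigma b (sigma b) := fconnect1 _ _.
rewrite /face_len -(findex_add_rev face_perm_inj b_sb neq_b).
have ge3 := face_return_ge3 b_sb neq_b s_b.
have neq3 : findex phi b (sigma b) != 3.
  by apply: contraNneq (face_perm3_neq_sigma b) => <-; rewrite iter_findex.
have := face_return_ge3 (x := sigma b) (y := b).
rewrite face_perm_sym b_sb eq_sym neq_b (fconnect_sym sigma_inj) s_b.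
by move=> /(_ isT isT isT); lia.
Qed.

Lemma corner_sum_le d1 d2 :
  d1 != d2 -> fconnect sigma d1 d2 -> face_len d2 = face_len d1 ->
  (\sum_(e | fconnect sigma d1 e) ((face_len e)%:R^-1 : rat)
     <= 2 / (face_len d1)%:R + ((deg sigma d1)%:R - 2) / 3)%R.
Proof.
move=> neq12 s12 len2; set n := face_len d1.
suff excess : (\sum_(e | fconnect sigma d1 e) ((face_len e)%:R^-1 - 3^-1)
                 <= 2 * (n%:R^-1 - 3^-1) :> rat)%R.
  rewrite sumrB sumr_const -mulr_natl in excess.
  rewrite -[#|_|]/(deg sigma d1) in excess; lra.
rewrite (bigD1 d1) ?connect0 //= (bigD1 d2) /=; last by rewrite s12 eq_sym.
rewrite len2 -/n.
suff : (\sum_(e | fconnect sigma d1 e && (e != d1) && (e != d2))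
          ((face_len e)%:R^-1 - 3^-1) <= 0 :> rat)%R by lra.
apply: sumr_le0 => e _; have e_ge3 := face_len_ge3 e.
by rewrite subr_le0 lef_pV2 ?posrE ?ltr0n ?ler_nat // (leq_trans _ e_ge3).
Qed.

Hypothesis curvature_pos : forall d, (0 < curvature alpha sigma d)%R.

Lemma face_vertex_repeat_len d :
  face_vertex_repeat alpha sigma d -> 7 <= face_len d <= 11.
Proof.
move=> [d1 [d2 [d_d1 d_d2 neq12 s12]]].
have f12 : fconnect phi d1 d2 by rewrite (connect_trans _ d_d2) // face_perm_sym.
have len2 : face_len d2 = face_len d1 := order_fconnect face_perm_inj f12.
have -> : face_len d = face_len d1 := esym (order_fconnect face_perm_inj d_d1).
have [deg3 len_le11] : deg sigma d1 = 3 /\ face_len d1 <= 11.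
  apply: positive_curvature_bound (deg_ge3 d1) (face_len_ge6 f12 neq12 s12) _.
  by apply: lt_le_trans (curvature_pos d1) _; rewrite lerD2l (corner_sum_le neq12).
rewrite len_le11 andbT.
have [d2E|d1E] := order3_adjacent sigma_inj deg3 s12 neq12.
  by rewrite face_len_ge7 // -d2E.
by rewrite -len2 face_len_ge7 // -d1E face_perm_sym.
Qed.

Lemma face_edge_repeat_vertex_repeat d :
  face_edge_repeat alpha sigma d -> face_vertex_repeat alpha sigma d.
Proof.
move=> [d1 [d_d1 d_ad1]]; exists d1, (sigma d1); split=> //; last exact: fconnect1.
  by rewrite (connect_trans d_ad1) // -{2}(alpha_inv d1) fconnect1.
by rewrite eq_sym sigma_neq.
Qed.

End PlanarMaps.

Theorem lemma2p2 (D : finType) (alpha sigma : D -> D) :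
  planar_PCC alpha sigma ->
  forall d : D,
    (face_vertex_repeat alpha sigma d -> 7 <= face_len alpha sigma d <= 11) /\
    (face_edge_repeat alpha sigma d -> 7 <= face_len alpha sigma d <= 11).
Proof.
move=> [[sigma_inj alpha_inv _ _ _] [no_loop no_multi_edge] curv_pos deg_ge3 _] d.
have len_bounds := face_vertex_repeat_len sigma_inj alpha_inv no_loop no_multi_edge
  deg_ge3 curv_pos (d := d).
split=> // /(face_edge_repeat_vertex_repeat alpha_inv deg_ge3); exact: len_bounds.
Qed.
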